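(* Let $N\geq 1$ and let $a_1,\dots,a_N$ be real numbers with $1<a_1<a_2<\cdots<a_N$; set $a_0=1$ and $\mathbf{a}=(a_1,\dots,a_N)$. Let $\delta>0$. Then: (a) If $f:[0,\delta]\to\mathbb{R}$ is a solution of $f(x)+f(a_1x)+\cdots+f(a_Nx)=0$ on $[0,\delta]$ and $f\in C^{(m(\mathbf{a}))}[0,\delta]$, then $f\equiv 0$ on $[0,\delta]$. (b) If $f:[-\delta,0]\to\mathbb{R}$ is a solution of $f(x)+f(a_1x)+\cdots+f(a_Nx)=0$ on $[-\delta,0]$ and $f\in C^{(m(\mathbf{a}))}[-\delta,0]$, then $f\equiv 0$ on $[-\delta,0]$.
   Context: For an interval $I\subseteq\mathbb{R}$, a function $f:I\to\mathbb{R}$ is called a solution of $f(x)+f(a_1x)+\cdots+f(a_Nx)=0$ on $I$ if $f(x)+f(a_1x)+\cdots+f(a_Nx)=0$ holds for every $x$ such that $\{x,a_1x,\dots,a_Nx\}\subseteq I$. With $a_0=1$, define the natural number $m(\mathbf{a})=\min\{m\in\mathbb{N}: \sum_{k=0}^{N-1}(a_k/a_N)^m<1\}$ (well defined since $0<a_k/a_N<1$ for $0\le k\le N-1$). $C^{(m)}[\alpha,\beta]$ denotes the $m$ times continuously differentiable functions on $[\alpha,\beta]$ (one-sided derivatives at endpoints). *)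

From Stdlib Require Import Reals.
Open Scope R_scope.

Definition coef (a : nat -> R) (k : nat) : R :=
  match k with O => 1 | S _ => a k end.

Definition is_solution (N : nat) (a : nat -> R) (lo hi : R) (f : R -> R) : Prop :=
  forall x : R,
    (forall k, (k <= N)%nat -> lo <= coef a k * x <= hi) ->
    sum_f_R0 (fun k => f (coef a k * x)) N = 0.

Definition m_cond (N : nat) (a : nat -> R) (m : nat) : Prop :=
  sum_f_R0 (fun k => (coef a k / a N) ^ m) (N - 1) < 1.

Definition is_m_of (N : nat) (a : nat -> R) (m : nat) : Prop :=
  m_cond N a m /\ forall m', (m' < m)%nat -> ~ m_cond N a m'.

Definition cont_on (lo hi : R) (g : R -> R) : Prop :=
  forall x, lo <= x <= hi ->
    limit1_in g (fun y => lo <= y <= hi) (g x) x.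

Definition deriv_on (lo hi : R) (f g : R -> R) : Prop :=
  forall x, lo <= x <= hi ->
    limit1_in (fun y => (f y - f x) / (y - x))
              (fun y => lo <= y <= hi /\ y <> x) (g x) x.

Definition Cm_on (m : nat) (lo hi : R) (f : R -> R) : Prop :=
  exists D : nat -> R -> R,
    (forall x, lo <= x <= hi -> D O x = f x) /\
    (forall k, (k < m)%nat -> deriv_on lo hi (D k) (D (S k))) /\
    cont_on lo hi (D m).

(* Substituting x = y / a_N, a solution on an interval [lo,hi] containing 0
   satisfies the dilation equation  g(y) + sum_k c_k^j g(c_k y) = 0  with
   j = 0, g = f and weights c_k = a_k / a_N in (0,1), k = 0..N-1.
   Differentiating multiplies every weight once more by c_k, so the j-th
   derivative of f satisfies the dilation equation with exponent j.
   For j = m(a) the weights sum to less than 1, and comparing both sides at a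
   point where |f^(m)| is maximal forces f^(m) = 0.  Descending again, if
   f^(j+1) = 0 then f^(j) is constant on the open interval, and a constant
   solution of the dilation equation vanishes; hence f = f^(0) = 0. *)

From Stdlib Require Import Reals Lra Lia.
Open Scope R_scope.

Lemma limit1_in_ext (f g : R -> R) (D : R -> Prop) (l x : R) :
  (forall y, D y -> f y = g y) -> limit1_in f D l x -> limit1_in g D l x.
Proof.
  unfold limit1_in, limit_in; intros Hfg Hf eps Heps.
  destruct (Hf eps Heps) as [alp [Halp Hclose]]; exists alp; split; auto.
  intros y [Dy Hy]; rewrite <- Hfg by auto; apply Hclose; auto.
Qed.

Lemma deriv_on_ext (lo hi : R) (f g h : R -> R) :
  deriv_on lo hi f g -> (forall x, lo <= x <= hi -> g x = h x) ->
  deriv_on lo hi f h.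
Proof. intros Hf Hgh x Hx; rewrite <- Hgh by auto; auto. Qed.

Lemma deriv_on_plus (lo hi : R) (f f' g g' : R -> R) :
  deriv_on lo hi f f' -> deriv_on lo hi g g' ->
  deriv_on lo hi (fun y => f y + g y) (fun y => f' y + g' y).
Proof.
  intros Hf Hg x Hx.
  eapply limit1_in_ext; [|apply limit_plus; [apply Hf | apply Hg]; auto].
  intros y _; simpl; unfold Rdiv; ring.
Qed.

Lemma deriv_on_scal (lo hi c : R) (f f' : R -> R) :
  deriv_on lo hi f f' -> deriv_on lo hi (fun y => c * f y) (fun y => c * f' y).
Proof.
  intros Hf x Hx.
  eapply limit1_in_ext;
    [|apply limit_mul; [apply (limit_free (fun _ => c) _ x x) | apply Hf]; auto].
  intros y _; simpl; unfold Rdiv; ring.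
Qed.

Lemma deriv_on_sum (lo hi : R) (F F' : nat -> R -> R) (n : nat) :
  (forall k, (k <= n)%nat -> deriv_on lo hi (F k) (F' k)) ->
  deriv_on lo hi (fun y => sum_f_R0 (fun k => F k y) n)
                 (fun y => sum_f_R0 (fun k => F' k y) n).
Proof.
  induction n as [|n IH]; intros HF; simpl.
  - apply HF; lia.
  - apply deriv_on_plus; [apply IH; intros; apply HF | apply HF]; lia.
Qed.

Lemma deriv_on_dilate (lo hi b : R) (f f' : R -> R) :
  deriv_on lo hi f f' -> 0 < b ->
  (forall y, lo <= y <= hi -> lo <= b * y <= hi) ->
  deriv_on lo hi (fun y => f (b * y)) (fun y => b * f' (b * y)).
Proof.
  unfold deriv_on, limit1_in, limit_in; simpl; unfold Rdist.
  intros Hf Hb Hmaps x Hx eps Heps.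
  destruct (Hf (b * x) (Hmaps x Hx) (eps / b)) as [alp [Halp Hclose]].
  { apply Rdiv_lt_0_compat; lra. }
  exists (alp / b); split; [apply Rdiv_lt_0_compat; lra|].
  intros y [[Hy Hyx] Hdist].
  assert (Hyx' : y - x <> 0) by lra.
  assert (Hscaled : b * y - b * x = b * (y - x)) by ring.
  assert (Hbyx : b * y - b * x <> 0)
    by (rewrite Hscaled; apply Rmult_integral_contrapositive; split; lra).
  replace ((f (b * y) - f (b * x)) / (y - x) - b * f' (b * x))
    with (b * ((f (b * y) - f (b * x)) / (b * y - b * x) - f' (b * x)))
    by (field; auto).
  rewrite Rabs_mult, (Rabs_pos_eq b) by lra.
  assert (Hq : Rabs ((f (b * y) - f (b * x)) / (b * y - b * x) - f' (b * x)) < eps / b).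
  { apply Hclose; split; [split; [apply Hmaps; auto | lra]|].
    rewrite Hscaled, Rabs_mult, (Rabs_pos_eq b) by lra.
    apply (Rmult_lt_compat_l b) in Hdist; [|lra].
    replace (b * (alp / b)) with alp in Hdist by (field; lra); lra. }
  apply (Rmult_lt_compat_l b) in Hq; [|lra].
  replace (b * (eps / b)) with eps in Hq by (field; lra); lra.
Qed.

(* Every point of a nondegenerate interval is a limit of other points of it,
   so one-sided derivatives on [lo,hi] are unique. *)
Lemma punctured_interval_adherent (lo hi x : R) :
  lo < hi -> lo <= x <= hi -> adhDa (fun y => lo <= y <= hi /\ y <> x) x.
Proof.
  intros Hlh Hx alp Halp; unfold Rdist.
  destruct (Rlt_dec x hi) as [Hxh|Hxh].
  - assert (Hl := Rmin_l (alp / 2) (hi - x)); assert (Hr := Rmin_r (alp / 2) (hi - x)).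
    assert (Hp := Rmin_pos (alp / 2) (hi - x) ltac:(lra) ltac:(lra)).
    exists (x + Rmin (alp / 2) (hi - x)); split; [lra|].
    rewrite Rabs_pos_eq; lra.
  - assert (Hl := Rmin_l (alp / 2) (x - lo)); assert (Hr := Rmin_r (alp / 2) (x - lo)).
    assert (Hp := Rmin_pos (alp / 2) (x - lo) ltac:(lra) ltac:(lra)).
    exists (x - Rmin (alp / 2) (x - lo)); split; [lra|].
    rewrite Rabs_left; lra.
Qed.

Lemma deriv_on_of_zero (lo hi : R) (g g' : R -> R) :
  lo < hi -> deriv_on lo hi g g' -> (forall y, lo <= y <= hi -> g y = 0) ->
  forall x, lo <= x <= hi -> g' x = 0.
Proof.
  intros Hlh Hg Hzero x Hx.
  apply (single_limit (fun y => (g y - g x) / (y - x))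
           (fun y => lo <= y <= hi /\ y <> x) _ _ x);
    [apply punctured_interval_adherent; auto | apply Hg; auto |].
  eapply limit1_in_ext; [|apply (limit_free (fun _ => 0) _ x x)].
  intros y [Hy _]; rewrite (Hzero y Hy), (Hzero x Hx); unfold Rdiv; ring.
Qed.

Lemma deriv_on_interior (lo hi x : R) (f f' : R -> R) :
  deriv_on lo hi f f' -> lo < x < hi -> derivable_pt_lim f x (f' x).
Proof.
  unfold deriv_on, limit1_in, limit_in, derivable_pt_lim; simpl; unfold Rdist.
  intros Hf Hx eps Heps.
  destruct (Hf x ltac:(lra) eps Heps) as [alp [Halp Hclose]].
  assert (Hr := Rmin_pos (x - lo) (hi - x) ltac:(lra) ltac:(lra)).
  assert (Hp := Rmin_pos alp (Rmin (x - lo) (hi - x)) Halp Hr).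
  assert (H1 := Rmin_l alp (Rmin (x - lo) (hi - x))).
  assert (H2 := Rmin_r alp (Rmin (x - lo) (hi - x))).
  assert (H3 := Rmin_l (x - lo) (hi - x)); assert (H4 := Rmin_r (x - lo) (hi - x)).
  exists (mkposreal _ Hp); simpl; intros h Hh Hhsmall.
  apply Rabs_def2 in Hhsmall as [Hh1 Hh2].
  specialize (Hclose (x + h)); replace (x + h - x) with h in Hclose by ring.
  apply Hclose; split; [split; lra | apply Rabs_def1; lra].
Qed.

Lemma deriv_on_zero_const (lo hi : R) (f f' : R -> R) :
  deriv_on lo hi f f' -> (forall x, lo <= x <= hi -> f' x = 0) ->
  forall u v, lo < u < hi -> lo < v < hi -> f u = f v.
Proof.
  intros Hf Hzero.
  assert (Hordered : forall u v, lo < u < hi -> lo < v < hi -> u < v -> f u = f v).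
  { intros u v Hu Hv Huv.
    destruct (MVT_cor2 f f' u v Huv) as [c [Hc Hcuv]].
    - intros c Hc; apply (deriv_on_interior lo hi); auto; lra.
    - rewrite Hzero in Hc by lra; lra. }
  intros u v Hu Hv; destruct (Rtotal_order u v) as [Huv|[->|Hvu]]; auto.
  symmetry; auto.
Qed.

(* Extreme value theorem for |g| with g continuous on [lo,hi]: extend g by
   clamping to a globally continuous function and use continuity_ab_maj. *)
Lemma cont_on_abs_max (lo hi : R) (g : R -> R) :
  lo <= hi -> cont_on lo hi g ->
  exists x0, lo <= x0 <= hi /\
             forall y, lo <= y <= hi -> Rabs (g y) <= Rabs (g x0).
Proof.
  intros Hlh Hg.
  set (clamp := fun y => Rmax lo (Rmin hi y)).
  assert (Hin : forall y, lo <= clamp y <= hi)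
    by (intros y; unfold clamp, Rmax, Rmin; repeat destruct Rle_dec; lra).
  assert (Hid : forall y, lo <= y <= hi -> clamp y = y)
    by (intros y Hy; unfold clamp, Rmax, Rmin; repeat destruct Rle_dec; lra).
  assert (Hlip : forall y z, Rabs (clamp y - clamp z) <= Rabs (y - z)).
  { intros y z; unfold clamp, Rmax, Rmin; repeat destruct Rle_dec;
      unfold Rabs; repeat destruct Rcase_abs; lra. }
  assert (Hcont : forall c, continuity_pt (fun y => g (clamp y)) c).
  { intros c; unfold continuity_pt, continue_in, limit1_in, limit_in; simpl; unfold Rdist.
    intros eps Heps; destruct (Hg (clamp c) (Hin c) eps Heps) as [alp [Halp Hclose]].
    exists alp; split; auto; intros y [_ Hy].
    apply Hclose; split; [apply Hin | eapply Rle_lt_trans; [apply Hlip | auto]]. }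
  destruct (continuity_ab_maj (fun y => Rabs (g (clamp y))) lo hi Hlh)
    as [x0 [Hmax Hx0]].
  { intros c _; apply (continuity_pt_comp (fun y => g (clamp y)) Rabs); auto.
    apply Rcontinuity_abs. }
  exists x0; split; auto; intros y Hy.
  specialize (Hmax y Hy); simpl in Hmax; rewrite !Hid in Hmax by auto; auto.
Qed.

Definition dilation_sum (n : nat) (c : nat -> R) (j : nat) (g : R -> R) (y : R) : R :=
  sum_f_R0 (fun k => c k ^ j * g (c k * y)) n.

Definition dilation_eq (n : nat) (c : nat -> R) (j : nat) (lo hi : R) (g : R -> R) : Prop :=
  forall y, lo <= y <= hi -> g y + dilation_sum n c j g y = 0.

Section DilationEquation.

Variables (n : nat) (c : nat -> R) (lo hi : R).
Hypothesis weights_in : forall k, (k <= n)%nat -> 0 < c k < 1.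
Hypothesis interval_nondegenerate : lo < hi.
Hypothesis interval_contains_0 : lo <= 0 <= hi.

Lemma dilate_in (k : nat) (y : R) :
  (k <= n)%nat -> lo <= y <= hi -> lo <= c k * y <= hi.
Proof. intros Hk Hy; destruct (weights_in k Hk); split; nra. Qed.

Lemma dilate_interior (k : nat) (y : R) :
  (k <= n)%nat -> lo <= y <= hi -> y <> 0 -> lo < c k * y < hi.
Proof.
  intros Hk Hy Hy0; destruct (weights_in k Hk).
  destruct (Rlt_dec 0 y); [split; nra | assert (y < 0) by lra; split; nra].
Qed.

Lemma weight_sum_nonneg (j : nat) : 0 <= sum_f_R0 (fun k => c k ^ j) n.
Proof.
  rewrite <- (Rmult_0_l (INR (S n))), <- sum_cte.
  apply sum_Rle; intros k Hk; destruct (weights_in k Hk); apply pow_le; lra.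
Qed.

Lemma dilation_eq_ext (j : nat) (g h : R -> R) :
  (forall y, lo <= y <= hi -> g y = h y) ->
  dilation_eq n c j lo hi g -> dilation_eq n c j lo hi h.
Proof.
  intros Hgh Heq y Hy; unfold dilation_sum.
  rewrite <- Hgh, (sum_eq _ (fun k => c k ^ j * g (c k * y))) by
    (auto; intros k Hk; rewrite Hgh; auto; apply dilate_in; auto).
  apply Heq; auto.
Qed.

Lemma dilation_eq_deriv (j : nat) (g g' : R -> R) :
  deriv_on lo hi g g' -> dilation_eq n c j lo hi g ->
  dilation_eq n c (S j) lo hi g'.
Proof.
  intros Hg Heq.
  assert (Hderiv : deriv_on lo hi (fun y => g y + dilation_sum n c j g y)
                                  (fun y => g' y + dilation_sum n c (S j) g' y)).
  { unfold dilation_sum; eapply deriv_on_ext.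
    - apply deriv_on_plus; [exact Hg|].
      apply (deriv_on_sum lo hi (fun k y => c k ^ j * g (c k * y))
               (fun k y => c k ^ j * (c k * g' (c k * y)))).
      intros k Hk; apply deriv_on_scal, deriv_on_dilate; auto.
      + destruct (weights_in k Hk); lra.
      + intros; apply dilate_in; auto.
    - intros x _; cbv beta; f_equal; apply sum_eq; intros; simpl; ring. }
  exact (deriv_on_of_zero lo hi _ _ interval_nondegenerate Hderiv Heq).
Qed.

(* If the weights c_k^j sum to less than 1, a continuous solution vanishes:
   at a maximum point of |g| the equation gives |g|max <= (sum c_k^j) |g|max. *)
Lemma dilation_eq_small_weights (j : nat) (g : R -> R) :
  cont_on lo hi g -> sum_f_R0 (fun k => c k ^ j) n < 1 ->
  dilation_eq n c j lo hi g -> forall y, lo <= y <= hi -> g y = 0.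
Proof.
  intros Hg Hsmall Heq.
  destruct (cont_on_abs_max lo hi g) as [x0 [Hx0 Hmax]]; [lra | auto |].
  set (M := Rabs (g x0)).
  assert (HM : M <= sum_f_R0 (fun k => c k ^ j) n * M).
  { assert (HMsum : M = Rabs (dilation_sum n c j g x0))
      by (unfold M; rewrite <- Rabs_Ropp; f_equal; specialize (Heq x0 Hx0); lra).
    rewrite HMsum at 1.
    eapply Rle_trans; [apply sum_f_R0_triangle|].
    rewrite Rmult_comm, scal_sum; apply sum_Rle; intros k Hk.
    destruct (weights_in k Hk).
    rewrite Rabs_mult, (Rabs_pos_eq (c k ^ j)) by (apply pow_le; lra).
    apply Rmult_le_compat_l; [apply pow_le; lra | apply Hmax, dilate_in; auto]. }
  assert (HM0 : M = 0).
  { assert (0 <= M) by apply Rabs_pos.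
    destruct (Req_dec M 0) as [|HMnz]; auto.
    assert (sum_f_R0 (fun k => c k ^ j) n * M < 1 * M)
      by (apply Rmult_lt_compat_r; lra); lra. }
  intros y Hy; specialize (Hmax y Hy); fold M in Hmax; rewrite HM0 in Hmax.
  assert (Habs := Rabs_pos (g y)).
  destruct (Req_dec (g y) 0) as [|Hgy]; auto.
  assert (0 < Rabs (g y)) by (apply Rabs_pos_lt; auto); lra.
Qed.

Lemma dilation_eq_fixed_value (j : nat) (g : R -> R) (y : R) :
  dilation_eq n c j lo hi g -> lo <= y <= hi ->
  (forall k, (k <= n)%nat -> g (c k * y) = g y) -> g y = 0.
Proof.
  intros Heq Hy Hfixed; specialize (Heq y Hy); unfold dilation_sum in Heq.
  rewrite (sum_eq _ (fun k => c k ^ j * g y)) in Heq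
    by (intros k Hk; rewrite Hfixed; auto).
  rewrite <- scal_sum in Heq.
  assert (Hpos := weight_sum_nonneg j).
  assert (Hprod : g y * (1 + sum_f_R0 (fun k => c k ^ j) n) = 0) by lra.
  apply Rmult_integral in Hprod as [|]; auto; lra.
Qed.

Lemma dilation_eq_const (j : nat) (g : R -> R) :
  dilation_eq n c j lo hi g ->
  (forall u v, lo < u < hi -> lo < v < hi -> g u = g v) ->
  forall y, lo <= y <= hi -> g y = 0.
Proof.
  intros Heq Hconst.
  assert (Hy0 : exists y0, lo < y0 < hi /\ y0 <> 0).
  { destruct (Rlt_dec 0 hi); [exists (hi / 2) | exists (lo / 2)]; split; lra. }
  destruct Hy0 as [y0 [Hy0 Hy0nz]].
  assert (Hinterior : forall u, lo < u < hi -> g u = 0).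
  { intros u Hu; rewrite (Hconst u y0) by auto.
    apply (dilation_eq_fixed_value j); [auto | lra |].
    intros k Hk; apply Hconst; [apply dilate_interior | ]; auto; lra. }
  intros y Hy; destruct (Req_dec y 0) as [->|Hynz].
  - apply (dilation_eq_fixed_value j); auto; intros k _; rewrite Rmult_0_r; auto.
  - specialize (Heq y Hy); unfold dilation_sum in Heq.
    rewrite (sum_eq _ (fun _ => 0)), sum_cte in Heq; [lra|].
    intros k Hk; rewrite Hinterior by (apply dilate_interior; auto); ring.
Qed.

Lemma dilation_eq_Cm_zero (m : nat) (f : R -> R) :
  sum_f_R0 (fun k => c k ^ m) n < 1 ->
  dilation_eq n c 0 lo hi f -> Cm_on m lo hi f ->
  forall x, lo <= x <= hi -> f x = 0.
Proof.
  intros Hsmall Heq [D [HD0 [HD HDm]]].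
  assert (HD0eq : dilation_eq n c 0 lo hi (D O))
    by (apply (dilation_eq_ext 0 f); auto; intros; symmetry; auto).
  assert (HDeq : forall j, (j <= m)%nat -> dilation_eq n c j lo hi (D j)).
  { induction j as [|j IH]; intros Hj; auto.
    apply (dilation_eq_deriv j (D j)); [apply HD | apply IH]; lia. }
  assert (HDzero : forall i, (i <= m)%nat ->
                     forall y, lo <= y <= hi -> D (m - i)%nat y = 0).
  { induction i as [|i IH]; intros Hi.
    - rewrite Nat.sub_0_r; apply (dilation_eq_small_weights m); auto.
    - apply (dilation_eq_const (m - S i)); [apply HDeq; lia|].
      apply (deriv_on_zero_const lo hi _ (D (S (m - S i)))); [apply HD; lia|].
      replace (S (m - S i)) with (m - i)%nat by lia; apply IH; lia. }
  intros x Hx; rewrite <- HD0 by auto.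
  replace O with (m - m)%nat by lia; apply HDzero; auto.
Qed.

End DilationEquation.

Lemma increasing_coef (N : nat) (a : nat -> R) :
  (forall k, (1 <= k)%nat -> (k < N)%nat -> a k < a (S k)) ->
  forall i j, (1 <= i)%nat -> (i < j)%nat -> (j <= N)%nat -> a i < a j.
Proof.
  intros Hinc i j Hi Hij; induction Hij as [|j Hij IH]; intros Hj.
  - apply Hinc; lia.
  - apply Rlt_trans with (a j); [apply IH | apply Hinc]; lia.
Qed.

Lemma coef_below_top (N : nat) (a : nat -> R) :
  1 < a 1%nat -> (forall k, (1 <= k)%nat -> (k < N)%nat -> a k < a (S k)) ->
  forall k, (k < N)%nat -> 1 <= coef a k < a N.
Proof.
  intros H1 Hinc k Hk; destruct k as [|k]; simpl.
  - destruct (Nat.eq_dec N 1) as [->|HN]; [lra|].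
    assert (a 1%nat < a N) by (apply (increasing_coef N); auto; lia); lra.
  - assert (Hlow : a 1%nat <= a (S k)).
    { destruct k as [|k]; [lra|].
      apply Rlt_le, (increasing_coef N); auto; lia. }
    split; [lra | apply (increasing_coef N); auto; lia].
Qed.

Lemma ratio_in_unit (q p : R) : 0 < q -> q < p -> 0 < q / p < 1.
Proof.
  intros Hq Hqp; split; [apply Rdiv_lt_0_compat; lra|].
  apply (Rmult_lt_reg_r p); [lra|].
  unfold Rdiv; rewrite Rmult_assoc, Rinv_l, Rmult_1_r; lra.
Qed.

(* With x = y / a_N the functional equation becomes the dilation equation
   with exponent 0 and weights c_k = a_k / a_N, k = 0..N-1. *)
Lemma solution_dilation_eq (N : nat) (a : nat -> R) (lo hi : R) (f : R -> R) :
  (1 <= N)%nat -> (forall k, (k < N)%nat -> 1 <= coef a k < a N) ->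
  lo <= 0 <= hi -> is_solution N a lo hi f ->
  dilation_eq (N - 1) (fun k => coef a k / a N) 0 lo hi f.
Proof.
  intros HN Hcoef H0 Hsol y Hy.
  assert (HaN : 1 < a N) by (destruct (Hcoef (N - 1)%nat); [lia | lra]).
  assert (Hdil : forall k, coef a k * (y / a N) = coef a k / a N * y)
    by (intros; field; lra).
  assert (Hs := Hsol (y / a N)).
  destruct N as [|n]; [lia|]; replace (S n - 1)%nat with n by lia.
  simpl sum_f_R0 in Hs; simpl coef at 2 in Hs.
  replace (a (S n) * (y / a (S n))) with y in Hs by (field; lra).
  unfold dilation_sum; rewrite (sum_eq _ (fun k => f (coef a k / a (S n) * y)))
    by (intros k _; simpl; rewrite Rmult_1_l; reflexivity).
  rewrite (sum_eq _ (fun k => f (coef a k / a (S n) * y))) in Hs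
    by (intros; rewrite Hdil; reflexivity).
  rewrite Rplus_comm; apply Hs.
  intros k Hk; rewrite Hdil.
  assert (Hw : 0 < coef a k / a (S n) <= 1).
  { destruct (Nat.eq_dec k (S n)) as [->|HkN].
    - simpl; unfold Rdiv; rewrite Rinv_r by lra; lra.
    - destruct (Hcoef k ltac:(lia));
        destruct (ratio_in_unit (coef a k) (a (S n))); lra. }
  split; nra.
Qed.

Lemma solution_vanishes (N : nat) (a : nat -> R) (m : nat) (lo hi : R) (f : R -> R) :
  (1 <= N)%nat -> 1 < a 1%nat ->
  (forall k, (1 <= k)%nat -> (k < N)%nat -> a k < a (S k)) ->
  m_cond N a m -> lo < hi -> lo <= 0 <= hi ->
  is_solution N a lo hi f -> Cm_on m lo hi f ->
  forall x, lo <= x <= hi -> f x = 0.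
Proof.
  intros HN H1 Hinc Hm Hlh H0 Hsol HCm.
  assert (Hcoef := coef_below_top N a H1 Hinc).
  apply (dilation_eq_Cm_zero (N - 1) (fun k => coef a k / a N) lo hi) with (m := m); auto.
  - intros k Hk; destruct (Hcoef k ltac:(lia)); apply ratio_in_unit; lra.
  - apply solution_dilation_eq; auto.
Qed.

Theorem mainTheorem1 (N : nat) (a : nat -> R) (delta : R) (m : nat) :
  (1 <= N)%nat ->
  1 < a 1%nat ->
  (forall k, (1 <= k)%nat -> (k < N)%nat -> a k < a (S k)) ->
  0 < delta ->
  is_m_of N a m ->
  (forall f : R -> R,
      is_solution N a 0 delta f -> Cm_on m 0 delta f ->
      forall x, 0 <= x <= delta -> f x = 0) /\
  (forall f : R -> R,
      is_solution N a (- delta) 0 f -> Cm_on m (- delta) 0 f ->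
      forall x, - delta <= x <= 0 -> f x = 0).
Proof.
  intros HN H1 Hinc Hdelta [Hm _]; split; intros f Hsol HCm.
  - apply (solution_vanishes N a m 0 delta f); auto; lra.
  - apply (solution_vanishes N a m (- delta) 0 f); auto; lra.
Qed.
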